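(* Let $k=k(x)\ge2$ and $t=t(x)\ge1$ be functions of $x$ ($t$ integer-valued), and let $m$ be a uniformly random integer in $[1,x]$. Then \[ \mathbb{P}\big(\forall\,0\le i<t\ \exists\text{ prime }p_i>k\text{ with }v_{p_i}(m-i)=1\big)=1-O\Big(\frac{t\log k}{\log x}+\frac tk\Big), \] with an absolute implied constant.
   Context: $v_p$ denotes the $p$-adic valuation on the integers. *)

From Stdlib Require Import Reals ClassicalEpsilon ZArith.
From mathcomp Require Import all_boot.

(* p-adic valuation of an integer z: v_p(z) = v_p(|z|); with logn p 0 = 0,
   so v_p(0) is never 1 (matching v_p(0) = +oo). *)
Definition vp (p : nat) (z : Z) : nat := logn p (Z.abs_nat z).

Definition good (k : R) (t m : nat) : Prop :=
  forall i : nat, (i < t)%N ->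
    exists p : nat, prime p /\ Rlt k (INR p) /\ vp p (Z.of_nat m - Z.of_nat i)%Z = 1%N.

Definition indic (P : Prop) : R :=
  if excluded_middle_informative P then R1 else R0.

(* Probability that a uniform random integer m in [1, x] satisfies P,
   where N = floor x (the number of integers in [1, x]). *)
Definition unif_prob (N : nat) (P : nat -> Prop) : R :=
  Rdiv (foldr Rplus R0 (map (fun m => indic (P m)) (iota 1 N))) (INR N).

(* Let K = floor k and call n K-bad when no prime p > K has v_p(n) = 1.  The event can
   fail at m only if some m - i (i < t) is K-bad, so by a union bound over the shifts the
   failures among 1..N number at most t (t + #{K-bad n <= N}).  A K-bad n <= N is
   either divisible by p^2 for a prime p > K (at most sum_(j > K) N/j^2 <= N/K such n)
   or K-smooth.  With M = isqrt N, at most M smooth integers lie in [1, M]; the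
   product A of those in (M, N] divides N! and has no prime factor > K, so Legendre's
   formula gives A^K | (K!)^(4N), i.e. c log (M+1) <= 4 N log K for their number c.
   When 2 t log k < log x each of t^2, t N/K, t M, t c is O(N (t log k/log x + t/k));
   otherwise the claimed bound exceeds 1.  This yields the theorem with C = 20. *)

From Stdlib Require Import Reals ZArith Lia Lra ClassicalEpsilon.
From mathcomp Require Import all_boot zify.

Lemma count_le_countU {T : eqType} (a b c : pred T) (s : seq T) :
  {in s, forall x, a x -> b x || c x} -> count a s <= count b s + count c s.
Proof.
elim: s => //= x s IH abc.
have IHs : count a s <= count b s + count c s.
  by apply: IH => y ys; apply: abc; rewrite inE ys orbT.
case ax: (a x); last by rewrite add0n; apply: (leq_trans IHs); lia.
have := abc x (mem_head _ _) ax; case: (b x); case: (c x) => //= _; lia.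
Qed.

Lemma count_has_le_sum {T : eqType} (P : nat -> pred T) (l : seq nat) (s : seq T) :
  count (fun m => has (P^~ m) l) s <= \sum_(i <- l) count (P i) s.
Proof.
elim: l => [|i l IH]; first by rewrite big_nil; elim: s.
rewrite big_cons; apply: leq_trans (leq_add (leqnn _) IH).
by apply: count_le_countU => x _.
Qed.

Lemma sum_le_size_mul (l : seq nat) (f : nat -> nat) (c : nat) :
  {in l, forall i, f i <= c} -> \sum_(i <- l) f i <= size l * c.
Proof.
move=> fc; rewrite -sum1_size big_distrl /= big_seq [X in _ <= X]big_seq.
by apply: leq_sum => i il; rewrite mul1n fc.
Qed.

Lemma count_shift (b : pred nat) (i N : nat) :
  count (fun m => b (m - i)) (iota 1 N) <= i + count b (iota 1 N).
Proof.
elim: i N => [|i IH] N.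
  by rewrite add0n; apply: eq_leq; apply: eq_count => m; rewrite subn0.
set r := count b (iota 1 N).
have count_mono N' : N' <= N -> count b (iota 1 N') <= r.
  by move=> le; rewrite /r -(subnKC le) iotaD count_cat leq_addr.
rewrite -{1}[1]addn0 iotaDl count_map.
rewrite (@eq_count _ _ (fun m => b (m - i))); last by move=> m /=; rewrite add1n subSS.
clearbody r; case: N count_mono => [|N] count_mono //=.
apply: leq_trans (leq_add (leq_b1 _) (IH N)) _.
have := count_mono N (leqnSn N); lia.
Qed.

Lemma count_multiples (d N : nat) : 0 < d -> count (dvdn d) (iota 1 N) = N %/ d.
Proof.
move=> d0; elim: N => [|N IH]; first by rewrite div0n.
rewrite -[N.+1]addn1 iotaD count_cat IH /= add1n addn0 addn1 divnS // addnC.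
by rewrite -[N.+1]addn1.
Qed.

(* Telescoping tail estimate: sum_(K < j <= K + L) N %/ j^2 <= N %/ K,
   by induction on L, using N/(K+1)^2 + N/(K+1) <= N/K in integer form. *)
Lemma sum_div_sq_tail (N L K : nat) : 0 < K ->
  \sum_(j <- iota K.+1 L) N %/ (j ^ 2) <= N %/ K.
Proof.
elim: L K => [|L IH] K K0; first by rewrite big_nil.
rewrite /= big_cons leq_divRL //.
apply: leq_trans (leq_mul (leq_add (leqnn _) (IH K.+1 (ltn0Sn _))) (leqnn K)) _.
set x := N %/ K.+1 ^ 2; set y := N %/ K.+1.
have hx : x * (K.+1 * K.+1) <= N by rewrite mulnn leq_divM.
have hy : y * K.+1 <= N by rewrite leq_divM.
rewrite -(@leq_pmul2r (K.+1 * K.+1)) //; nia.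
Qed.

Lemma logn_fact_le (p N : nat) : prime p -> (p - 1) * logn p N`! <= N.
Proof.
move=> pp; rewrite logn_fact // /index_iota subSS subn0.
have telescope L : p * (\sum_(k <- iota 1 L) N %/ p ^ k) + N %/ p ^ L
                   <= N + \sum_(k <- iota 1 L) N %/ p ^ k.
  elim: L => [|L IH]; first by rewrite big_nil expn0 divn1 muln0 add0n addn0.
  rewrite -[L.+1]addn1 iotaD big_cat /= big_cons big_nil addn0 add1n.
  have h : N %/ p ^ L.+1 * p <= N %/ p ^ L by rewrite expnSr divnMA leq_divM.
  move: IH h; set T := \sum_(k <- iota 1 L) _; lia.
have := telescope N; set T := \sum_(k <- iota 1 N) _; set r := N %/ p ^ N.
rewrite mulnBl mul1n; lia.
Qed.

(* v_p(K!) >= K %/ p, the first term of Legendre's formula. *)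
Lemma logn_fact_ge (p K : nat) : prime p -> K %/ p <= logn p K`!.
Proof.
move=> pp; rewrite logn_fact //; case: K => [|K]; first by rewrite div0n.
by rewrite /index_iota subn1 /= big_cons expn1 leq_addr.
Qed.

(* For primes p <= K: K v_p(N!) <= 4 N v_p(K!), since v_p(N!) <= N/(p-1)
   while v_p(K!) >= K %/ p > K / (2p) and p <= 2(p - 1). *)
Lemma logn_fact_ratio (p K N : nat) : prime p -> p <= K ->
  K * logn p N`! <= 4 * N * logn p K`!.
Proof.
move=> pp pK; have := logn_fact_le p N pp; have := logn_fact_ge p K pp.
have p1 := prime_gt1 pp.
have Kq : K < p * (K %/ p).+1.
  by have := divn_eq K p; have := ltn_mod K p; rewrite prime_gt0 //; nia.
have q1 : 0 < K %/ p by rewrite divn_gt0 ?prime_gt0.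
move: Kq q1; set L := logn p N`!; set LK := logn p K`!; set q := K %/ p.
move=> Kq q1 qLK pL.
have e1 : K * L <= (2 * p * q) * L by apply: leq_mul => //; nia.
have e2 : (2 * p * q) * L <= (2 * p * LK) * L by rewrite leq_mul // leq_mul.
have e3 : (2 * p * LK) * L <= 4 * ((p - 1) * L) * LK.
  rewrite mulnAC mulnA; apply: leq_mul => //; apply: leq_mul => //; lia.
have e4 : 4 * ((p - 1) * L) * LK <= 4 * N * LK by rewrite leq_mul // leq_mul.
lia.
Qed.

(* The crude bound K! <= K^K, used to turn A^K | (K!)^(4N) into a size bound. *)
Lemma fact_le_expn (K : nat) : K`! <= K ^ K.
Proof.
elim: K => [|K IH] //; rewrite factS expnS leq_mul //.
by apply: leq_trans IH _; case: K => [|K] //; rewrite leq_exp2r.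
Qed.

Definition smooth (K n : nat) : bool := all (fun p => p <= K) (primes n).

Lemma dvdn_logn (a b : nat) : 0 < a -> 0 < b ->
  (forall p, prime p -> logn p a <= logn p b) -> a %| b.
Proof.
move=> a0 b0 ab; apply/dvdn_partP => // p.
by rewrite mem_primes => /and3P[pp _ _]; rewrite p_part pfactor_dvdn // ab.
Qed.

Lemma prod_filter_ge (a : pred nat) (M : nat) (s : seq nat) :
  {in s, forall n, M < n} -> M.+1 ^ count a s <= \prod_(n <- s | a n) n.
Proof.
elim: s => [|x s IH] sM; first by rewrite big_nil.
have IHs : M.+1 ^ count a s <= \prod_(n <- s | a n) n.
  by apply: IH => n ns; apply: sM; rewrite inE ns orbT.
rewrite big_cons /=; case: (a x) => /=; last by rewrite add0n.
by rewrite add1n expnS leq_mul // sM ?mem_head.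
Qed.

Lemma prod_filter_dvd (a : pred nat) (s : seq nat) :
  \prod_(n <- s | a n) n %| \prod_(n <- s) n.
Proof.
elim: s => [|x s IH]; first by rewrite !big_nil.
by rewrite !big_cons; case: (a x); [apply: dvdn_mul | apply: dvdn_mull].
Qed.

Lemma prime_ndvd_prod_filter (p : nat) (a : pred nat) (s : seq nat) : prime p ->
  {in s, forall n, a n -> ~~ (p %| n)} -> ~~ (p %| \prod_(n <- s | a n) n).
Proof.
move=> pp; elim: s => [|x s IH] sp.
  by rewrite big_nil dvdn1 neq_ltn prime_gt1 ?orbT.
have IHs : ~~ (p %| \prod_(n <- s | a n) n).
  by apply: IH => n ns; apply: sp; rewrite inE ns orbT.
rewrite big_cons; case ax: (a x) => //.
by rewrite Euclid_dvdM // negb_or IHs andbT sp ?mem_head.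
Qed.

(* Key divisibility: the product A of the K-smooth integers in (M, N] divides N!
   and has no prime factor > K; comparing valuations with logn_fact_ratio gives
   A ^ K %| (K!) ^ (4N). *)
Lemma smooth_prod_pow_dvd (M N K : nat) : M <= N ->
  (\prod_(n <- iota M.+1 (N - M) | smooth K n) n) ^ K %| K`! ^ (4 * N).
Proof.
move=> MN; set A := \prod_(n <- _ | _) n.
have s_gt0 : {in iota M.+1 (N - M), forall n, 0 < n}.
  by move=> n; rewrite mem_iota => /andP[+ _]; apply: leq_trans.
have A0 : 0 < A by rewrite /A big_seq_cond prodn_cond_gt0 // => n /andP[/s_gt0].
have AN : A %| N`!.
  rewrite fact_prod /index_iota subSS subn0 -(subnKC MN) iotaD big_cat /=.
  by apply: dvdn_mull; rewrite add1n prod_filter_dvd.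
apply: dvdn_logn; rewrite ?expn_gt0 ?A0 ?fact_gt0 // => p pp; rewrite !lognX.
have [pK | Kp] := leqP p K.
  apply: leq_trans (logn_fact_ratio p K N pp pK).
  by rewrite leq_mul2l dvdn_leq_log ?fact_gt0 ?orbT.
suff -> : logn p A = 0 by rewrite muln0.
apply/eqP; rewrite -leqn0 leqNgt logn_gt0 mem_primes pp A0 /=.
apply: prime_ndvd_prod_filter => // n ns /allP sm; apply/negP => pn.
by have := sm p; rewrite mem_primes pp s_gt0 // pn leqNgt Kp => /(_ isT).
Qed.

Lemma count_smooth_interval (M N K : nat) : M <= N -> 1 < K ->
  M.+1 ^ count (smooth K) (iota M.+1 (N - M)) <= K ^ (4 * N).
Proof.
move=> MN K1; set s := iota M.+1 (N - M).
have sM : {in s, forall n, M < n} by move=> n; rewrite mem_iota => /andP[].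
apply: (leq_trans (prod_filter_ge (smooth K) M s sM)).
rewrite -(@leq_exp2r _ _ K) ?(ltnW K1) //.
apply: leq_trans (dvdn_leq _ (smooth_prod_pow_dvd M N K MN)) _.
  by rewrite expn_gt0 fact_gt0.
have -> : (K ^ (4 * N)) ^ K = (K ^ K) ^ (4 * N) by rewrite -!expnM mulnC.
case: (posnP N) => [-> | N0] //.
by rewrite leq_exp2r ?muln_gt0 ?N0 ?fact_le_expn.
Qed.

(* n is K-bad if no prime p > K divides n exactly once; the event of the theorem
   can only fail at m when some m - i (i < t) is K-bad. *)
Definition bad (K n : nat) : bool :=
  ~~ has (fun p => (K < p) && (logn p n == 1)) (primes n).

Definition square_divisible (K N n : nat) : bool :=
  has (fun j => j ^ 2 %| n) (iota K.+1 N).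

Lemma bad_square_or_smooth (K N n : nat) : 0 < n -> n <= N -> bad K n ->
  square_divisible K N n || smooth K n.
Proof.
move=> n0 nN bn; case sm: (smooth K n); first by rewrite orbT.
move/negbT: sm => /allPn[p pn]; rewrite -ltnNge => Kp.
move: (pn); rewrite mem_primes => /and3P[pp _ pdn].
rewrite orbF; apply/hasP; exists p.
  by rewrite mem_iota Kp /=; have := dvdn_leq n0 pdn; lia.
have lp1 : logn p n != 1.
  by move: bn; rewrite /bad; apply: contra => lp; apply/hasP; exists p; rewrite ?Kp.
have lp0 : 0 < logn p n by rewrite logn_gt0.
by rewrite pfactor_dvdn //; lia.
Qed.

Lemma count_square_divisible (K N : nat) : 0 < K ->
  count (square_divisible K N) (iota 1 N) <= N %/ K.
Proof.
move=> K0; apply: leq_trans (count_has_le_sum (fun j => dvdn (j ^ 2)) _ _) _.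
apply: leq_trans (sum_div_sq_tail N N K K0); apply: eq_leq.
rewrite big_seq [RHS]big_seq; apply: eq_bigr => j; rewrite mem_iota => /andP[Kj _].
by rewrite count_multiples // expn_gt0; case: j Kj.
Qed.

Lemma count_bad (K N M : nat) : 0 < K -> M <= N ->
  count (bad K) (iota 1 N) <= N %/ K + M + count (smooth K) (iota M.+1 (N - M)).
Proof.
move=> K0 MN.
apply: leq_trans (@count_le_countU _ (bad K) (square_divisible K N) (smooth K) _ _) _.
  by move=> n; rewrite mem_iota => /andP[n0 nN]; apply: bad_square_or_smooth => //; lia.
rewrite -addnA leq_add ?count_square_divisible //.
rewrite -{1}(subnKC MN) iotaD count_cat add1n leq_add //.
by apply: leq_trans (count_size _ _) _; rewrite size_iota.
Qed.

(* Integers m in [1, N] with some K-bad m - i, i < t (with m - i truncated at 0). *)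
Definition some_bad_shift (K t m : nat) : bool :=
  has (fun i => bad K (m - i)) (iota 0 t).

(* Union bound over the t shifts, each costing at most t + #bad. *)
Lemma count_some_bad_shift (K t N M : nat) : 0 < K -> M <= N ->
  count (some_bad_shift K t) (iota 1 N)
    <= t * (t + (N %/ K + M + count (smooth K) (iota M.+1 (N - M)))).
Proof.
move=> K0 MN.
apply: leq_trans (count_has_le_sum (fun i m => bad K (m - i)) _ _) _.
set c := t + _; apply: (@leq_trans (size (iota 0 t) * c)); last by rewrite size_iota.
apply: sum_le_size_mul => i; rewrite mem_iota add0n => /andP[_ it].
apply: leq_trans (count_shift _ _ _) _.
by apply: leq_add; [apply: ltnW | apply: count_bad].
Qed.

Open Scope R_scope.

Lemma Rdiv_le_of_le_mul (a b n : R) : 0 < n -> a <= b * n -> a / n <= b.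
Proof.
move=> n0 abn; have -> : b = b * n / n by field; lra.
by apply: Rmult_le_compat_r => //; left; apply: Rinv_0_lt_compat.
Qed.

Lemma Rle_div_of_mul_le (a b n : R) : 0 < n -> a * n <= b -> a <= b / n.
Proof.
move=> n0 anb; have -> : a = a * n / n by field; lra.
by apply: Rmult_le_compat_r => //; left; apply: Rinv_0_lt_compat.
Qed.

Lemma scaled_term (t a C lk L N : R) : 0 <= t -> 0 < L ->
  a * L <= C * lk * N -> t * a <= C * (t * lk / L) * N.
Proof.
move=> t0 L0 aL.
have -> : C * (t * lk / L) * N = t * (C * lk * N) / L by field; lra.
have -> : t * a = t * (a * L) / L by field; lra.
apply: Rmult_le_compat_r; first by left; apply: Rinv_0_lt_compat.
exact: Rmult_le_compat_l.
Qed.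

Lemma error_bound (t N q M c K k L : R) :
  1 <= t -> 1 <= M -> M * M <= N -> 0 < K -> K <= k -> k <= 2 * K ->
  0 <= q -> q * K <= N -> 0 <= c -> c * L <= 8 * ln k * N ->
  / 2 < ln k -> L <= 2 * M -> 2 * t * ln k < L ->
  t * (t + (q + M + c)) / N <= 20 * (t * ln k / L + t / k).
Proof.
move=> t1 M1 MN K0 Kk k2K q0 qK c0 cL lk LM tL.
have N0 : 0 < N by nra.
have L0 : 0 < L by nra.
have tt : t * t <= 8 * (t * ln k / L) * N.
  apply: scaled_term; try lra.
  have : t * L <= L * L by nra.
  nra.
have tM : t * M <= 4 * (t * ln k / L) * N by apply: scaled_term; nra.
have tc : t * c <= 8 * (t * ln k / L) * N by apply: scaled_term; lra.
have tq : t * q <= 2 * (t / k) * N.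
  rewrite -[t in t / k]Rmult_1_r; apply: scaled_term; nra.
have AB : 0 <= t / k by apply: Rle_mult_inv_pos; lra.
apply: Rdiv_le_of_le_mul => //; nra.
Qed.

Lemma INR_expn (a b : nat) : INR (a ^ b) = INR a ^ b.
Proof. by elim: b => [|b IH] //=; rewrite expnS mult_INR IH. Qed.

Lemma floor_nat (k : R) : 2 <= k -> exists K : nat, (2 <= K)%N /\ INR K <= k < INR K + 1.
Proof.
move=> k2; have [up_gt up_le] := archimed k.
have up3 : (2 < up k)%Z by apply: lt_IZR; lra.
exists (Z.to_nat (up k - 1)).
have -> : INR (Z.to_nat (up k - 1)) = IZR (up k) - 1.
  by rewrite INR_IZR_INZ Z2Nat.id ?minus_IZR //; lia.
by split; [apply/leP; lia | lra].
Qed.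

Lemma good_of_no_bad_shift (k : R) (K t m : nat) : INR K <= k < INR K + 1 ->
  ~~ some_bad_shift K t m -> good k t m.
Proof.
move=> Kk /hasPn nobad i it.
have := nobad i; rewrite mem_iota add0n it negbK => /(_ isT) /hasP[p pin /andP[Kp /eqP vp1]].
move: (pin); rewrite mem_primes => /and3P[pp im _].
exists p; split => //; split.
  by have := le_INR _ _ (leP Kp); rewrite S_INR; lra.
by rewrite /vp (_ : Z.abs_nat _ = m - i)%N //; lia.
Qed.

Lemma unif_prob_deviation (N : nat) (P : nat -> Prop) (nb : pred nat) : (0 < N)%N ->
  (forall m, ~~ nb m -> P m) ->
  Rabs (unif_prob N P - R1) <= INR (count nb (iota 1 N)) / INR N.
Proof.
move=> N0 nbP; rewrite /unif_prob.
have sum_bounds (s : seq nat) :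
    INR (size s) - INR (count nb s) <= foldr Rplus R0 (map (fun m => indic (P m)) s)
    <= INR (size s).
  elim: s => [|m s IH]; first by rewrite /=; lra.
  rewrite [size _]/= [count _ _]/= [foldr _ _ _]/= S_INR.
  have ind01 : 0 <= indic (P m) <= 1.
    by rewrite /indic; case: excluded_middle_informative => ? /=; lra.
  case nbm: (nb m); rewrite ?add1n ?add0n ?S_INR; first lra.
  suff -> : indic (P m) = 1 by lra.
  rewrite /indic; case: excluded_middle_informative => // notPm.
  by exfalso; apply: notPm; apply: nbP; rewrite nbm.
have [lo hi] := sum_bounds (iota 1 N); rewrite size_iota in lo hi.
have NR : 0 < INR N by apply: lt_0_INR; apply/ltP.
set S := foldr _ _ _ in lo hi *.
rewrite Rabs_minus_sym.
have -> : R1 - S / INR N = (INR N - S) / INR N by field; lra.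
rewrite Rabs_pos_eq; last by apply: Rle_mult_inv_pos; lra.
by apply: Rmult_le_compat_r; [left; apply: Rinv_0_lt_compat | lra].
Qed.

Lemma ln_nondecreasing (a b : R) : 0 < a -> a <= b -> ln a <= ln b.
Proof. by move=> a0 [ab | <-]; [left; apply: ln_increasing | right]. Qed.

Lemma ln_succ_lt (y : R) : 0 < y -> ln (y + 1) < y.
Proof.
move=> y0; rewrite -{2}(ln_exp y); apply: ln_increasing; first lra.
by rewrite Rplus_comm; apply: exp_ineq1; lra.
Qed.

(* With M the integer square root of N and x < N + 1 <= (M + 1)^2: ln x <= 2 ln (M + 1). *)
Lemma ln_le_twice_ln_isqrt (x : R) (N : nat) : 0 < x -> x < INR N + 1 ->
  ln x <= 2 * ln (INR (Nat.sqrt N) + 1).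
Proof.
move=> x0 xN; have [_ /le_INR] := Nat.sqrt_spec' N; rewrite mult_INR !S_INR => Nsq.
rewrite -(ln_pow _ _ 2) /=; last exact: Rle_lt_0_plus_1 (pos_INR _).
by apply: ln_nondecreasing => //; lra.
Qed.

Lemma smooth_count_log (M N K : nat) : (M <= N)%N -> (1 < K)%N ->
  INR (count (smooth K) (iota M.+1 (N - M))) * ln (INR M + 1) <= 4 * INR N * ln (INR K).
Proof.
move=> MN K1; have := count_smooth_interval M N K MN K1.
move/leP/le_INR; rewrite !INR_expn S_INR => pow_le.
have K0 : 0 < INR K by apply: lt_0_INR; apply/ltP; exact: ltnW.
rewrite -ln_pow; last exact: Rle_lt_0_plus_1 (pos_INR _).
rewrite (_ : 4 * INR N = INR (4 * N)); last by rewrite mult_INR /=; ring.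
rewrite -ln_pow //; apply: ln_nondecreasing => //.
by apply: pow_lt; apply: Rle_lt_0_plus_1; apply: pos_INR.
Qed.

Definition bad_shift_density (K t N : nat) : R :=
  INR (count (some_bad_shift K t) (iota 1 N)) / INR N.

(* When ln x <= 2 t ln k the claimed bound exceeds 1, and a density is at most 1. *)
Lemma bad_shift_density_trivial (x k : R) (K t N : nat) : (0 < N)%N -> 2 <= x -> 2 <= k ->
  (1 <= t)%N -> ln x <= 2 * INR t * ln k ->
  bad_shift_density K t N <= 20 * (INR t * ln k / ln x + INR t / k).
Proof.
move=> N0 x2 k2 t1 small.
have NR : 0 < INR N by apply: lt_0_INR; apply/ltP.
have lnx : 0 < ln x by rewrite -ln_1; apply: ln_increasing; lra.
have GN : bad_shift_density K t N <= 1.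
  apply: Rdiv_le_of_le_mul => //; rewrite Rmult_1_l; apply: le_INR; apply/leP.
  by rewrite -[X in (_ <= X)%N](size_iota 1 N) count_size.
have A_ge : / 2 <= INR t * ln k / ln x by apply: Rle_div_of_mul_le; lra.
have B0 : 0 <= INR t / k by apply: Rle_mult_inv_pos; [apply: pos_INR | lra].
lra.
Qed.

Lemma bad_shift_density_main (x k : R) (K t N : nat) :
  2 <= x -> x < INR N + 1 -> (2 <= K)%N -> INR K <= k < INR K + 1 -> (1 <= t)%N ->
  2 * INR t * ln k < ln x ->
  bad_shift_density K t N <= 20 * (INR t * ln k / ln x + INR t / k).
Proof.
move=> x2 xN K2 Kk t1 large.
have N2 : (2 <= N)%N by apply/leP; apply: INR_lt; rewrite /=; lra.
have NR : 0 < INR N by apply: lt_0_INR; apply/ltP; exact: ltnW.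
have KR : 2 <= INR K by apply: (le_INR 2); apply/leP.
have tR : 1 <= INR t by apply: (le_INR 1); apply/leP.
have lnk : / 2 < ln k by apply: Rlt_le_trans ln_lt_2 (ln_nondecreasing _ _ _ _); lra.
set M := Nat.sqrt N; have [MM NM] := Nat.sqrt_spec' N.
have MN : (M <= N)%N by apply/leP; apply: Nat.sqrt_le_lin.
have M1 : 1 <= INR M by apply: (le_INR 1); move/leP: N2 => N2; nia.
have lnM : ln x <= 2 * ln (INR M + 1) by apply: ln_le_twice_ln_isqrt; lra.
have lnM_M := ln_succ_lt (INR M) ltac:(lra).
have lnK : ln (INR K) <= ln k by apply: ln_nondecreasing; lra.
set c := count (smooth K) (iota M.+1 (N - M)).
have cL : INR c * ln (INR M + 1) <= 4 * INR N * ln (INR K) by apply: smooth_count_log.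
have G_le : INR (count (some_bad_shift K t) (iota 1 N))
            <= INR t * (INR t + (INR (N %/ K) + INR M + INR c)).
  rewrite -!plus_INR -mult_INR; apply: le_INR; apply/leP.
  by apply: count_some_bad_shift; [exact: ltnW | exact: MN].
apply: Rle_trans (Rmult_le_compat_r _ _ _ _ G_le) _.
  by left; apply: Rinv_0_lt_compat.
apply: (error_bound _ _ _ _ _ (INR K)); try lra.
- by rewrite -mult_INR; apply: le_INR.
- exact: pos_INR.
- by rewrite -mult_INR; apply: le_INR; apply/leP; apply: leq_divM.
- exact: pos_INR.
- have c0 := pos_INR c.
  have : INR c * ln x <= INR c * (2 * ln (INR M + 1)) by apply: Rmult_le_compat_l.
  have : INR N * ln (INR K) <= INR N * ln k by apply: Rmult_le_compat_l; lra.
  lra.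
Qed.

Theorem corollary4p3 :
  exists C : R, Rlt R0 C /\
    forall (x k : R) (t N : nat),
      Rle (INR 2) x ->
      Rle (INR N) x -> Rlt x (Rplus (INR N) R1) ->
      Rle (INR 2) k ->
      (1 <= t)%N ->
      Rle (Rabs (Rminus (unif_prob N (good k t)) R1))
          (Rmult C (Rplus (Rdiv (Rmult (INR t) (ln k)) (ln x)) (Rdiv (INR t) k))).
Proof.
exists 20; split; first lra.
move=> x k t N; rewrite (_ : INR 2 = 2); last by rewrite /=; ring.
move=> x2 _ xN k2 t1.
have [K [K2 Kk]] := floor_nat k k2.
have N0 : (0 < N)%N by apply/ltP; apply: INR_lt; rewrite /=; lra.
apply: Rle_trans (unif_prob_deviation N (good k t) (some_bad_shift K t) N0 _) _.
  by move=> m; apply: good_of_no_bad_shift.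
have [small | large] := Rle_lt_dec (ln x) (2 * INR t * ln k).
  exact: bad_shift_density_trivial.
exact: bad_shift_density_main.
Qed.
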